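(* For every integer $k>1$ and $0<\gamma<\frac12$, $$k\,h(\gamma)-1\;\le\;F(k,\gamma)\;\le\;k\,h(\gamma)+\log\!\big(1+(1-2\gamma)^k\big)-1.$$ In particular $F(k,\gamma)=k\,h(\gamma)-1+O\big((1-2\gamma)^k\big)$ as $k\to\infty$.
   Context: Logarithms are base 2 and $h(t)=-t\log t-(1-t)\log(1-t)$. For real $k\ge 2$ and $\gamma\in(0,\frac12)$, $$F(k,\gamma)=\min_{x\in(0,1)}\Big[\log\big((1+x)^k+(1-x)^k\big)-k\gamma\log x-1\Big].$$ *)

From Stdlib Require Import Reals Lra ClassicalEpsilon.
Open Scope R_scope.

Definition log2 (x : R) : R := ln x / ln 2.

Definition h (t : R) : R := - t * log2 t - (1 - t) * log2 (1 - t).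

Definition Gfun (k gamma x : R) : R :=
  log2 (Rpower (1 + x) k + Rpower (1 - x) k) - k * gamma * log2 x - 1.

Definition is_min_on_01 (g : R -> R) (m : R) : Prop :=
  (exists x, 0 < x < 1 /\ g x = m) /\ (forall x, 0 < x < 1 -> m <= g x).

(* F(k,gamma) = min_{x in (0,1)} Gfun k gamma x  (the minimum exists for
   k >= 2, 0 < gamma < 1/2; we select it by Hilbert's epsilon). *)
Definition F (k gamma : R) : R :=
  epsilon (inhabits 0) (is_min_on_01 (Gfun k gamma)).

From Stdlib Require Import Reals Lra Lia ClassicalEpsilon.
From Coquelicot Require Import Coquelicot.
Open Scope R_scope.

(* Write [(1+x)^k + (1-x)^k = (1+x)^k (1 + r^k)] with [r = (1-x)/(1+x)] in [[0, 1)]. With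
   natural logarithms the minimand becomes, up to the factor [1 / ln 2] and the shift [-1],
   [k (ln (1+x) - γ ln x) + ln (1 + r^k)].  By Gibbs' inequality the first bracket is at least
   the entropy of [γ] in nats, with equality at [x = γ / (1-γ)], where [r = 1 - 2γ]; the second
   term is nonnegative.  Hence every value is at least [k h(γ) - 1], and the value at
   [γ / (1-γ)] is the upper bound.  The minimum exists because the function blows up at [0]
   and has slope [k (1/2 - γ) > 0] at [1]. *)

Lemma ln_le_sub1 y : 0 < y -> ln y <= y - 1.
Proof. intros Hy; pose proof (exp_ineq1_le (ln y)) as He; rewrite exp_ln in He; lra. Qed.

Lemma ln2_pos : 0 < ln 2.
Proof. rewrite <- ln_1; apply ln_increasing; lra. Qed.

Definition entropy_ln (t : R) : R := - t * ln t - (1 - t) * ln (1 - t).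

Lemma h_entropy_ln t : h t = entropy_ln t / ln 2.
Proof. unfold h, entropy_ln, log2; field; apply Rgt_not_eq, ln2_pos. Qed.

(* Gibbs: left minus right is [g ln (x / (g (1+x))) + (1-g) ln (1 / ((1-g) (1+x)))], which
   [ln y <= y - 1] bounds by [g (x / (g (1+x)) - 1) + (1-g) (1 / ((1-g) (1+x)) - 1) = 0]. *)
Lemma entropy_ln_le_ln_succ_sub g x :
  0 < g < 1 -> 0 < x -> entropy_ln g <= ln (1 + x) - g * ln x.
Proof.
  intros [g0 g1] x0; unfold entropy_ln.
  assert (A := ln_le_sub1 (/ ((1 - g) * (1 + x))) ltac:(apply Rinv_0_lt_compat; nra)).
  assert (B := ln_le_sub1 (x / (g * (1 + x))) ltac:(apply Rdiv_lt_0_compat; nra)).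
  rewrite ln_Rinv, ln_mult in A by (try apply Rinv_0_lt_compat; nra).
  rewrite ln_div, ln_mult in B by nra.
  assert (sum0 : (1 - g) * (/ ((1 - g) * (1 + x)) - 1) + g * (x / (g * (1 + x)) - 1) = 0)
    by (field; split; lra).
  pose proof (Rmult_le_compat_l (1 - g) _ _ ltac:(lra) A).
  pose proof (Rmult_le_compat_l g _ _ ltac:(lra) B).
  lra.
Qed.

Lemma odds_in_01 g : 0 < g < 1 / 2 -> 0 < g / (1 - g) < 1.
Proof.
  intros Hg; split; [apply Rdiv_lt_0_compat; lra|].
  apply Rmult_lt_reg_r with (1 - g); [lra|]; field_simplify; lra.
Qed.

Lemma ln_succ_sub_at_odds g : 0 < g < 1 ->
  ln (1 + g / (1 - g)) - g * ln (g / (1 - g)) = entropy_ln g.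
Proof.
  intros Hg; unfold entropy_ln.
  replace (1 + g / (1 - g)) with (/ (1 - g)) by (field; lra).
  rewrite ln_Rinv, ln_div by lra; ring.
Qed.

Definition Gln (k : nat) (g x : R) : R :=
  ln ((1 + x) ^ k + (1 - x) ^ k) - INR k * g * ln x.

Lemma Gfun_Gln k g x : 0 < x < 1 -> Gfun (INR k) g x = Gln k g x / ln 2 - 1.
Proof.
  intros Hx; unfold Gfun, Gln, log2.
  rewrite !Rpower_pow by lra.
  field; apply Rgt_not_eq, ln2_pos.
Qed.

Lemma Gln_decomp k g x : 0 < x <= 1 ->
  Gln k g x = INR k * (ln (1 + x) - g * ln x) + ln (1 + ((1 - x) / (1 + x)) ^ k).
Proof.
  intros Hx; unfold Gln.
  assert (0 <= ((1 - x) / (1 + x)) ^ k) by (apply pow_le, Rdiv_le_0_compat; lra).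
  replace ((1 + x) ^ k + (1 - x) ^ k) with ((1 + x) ^ k * (1 + ((1 - x) / (1 + x)) ^ k))
    by (unfold Rdiv; rewrite Rpow_mult_distr, pow_inv; field; apply pow_nonzero; lra).
  rewrite ln_mult, ln_pow by (try apply pow_lt; lra); ring.
Qed.

Lemma ln_one_add_pow_nonneg r k : 0 <= r -> 0 <= ln (1 + r ^ k).
Proof.
  intros Hr; rewrite <- ln_1; apply ln_le; [lra|].
  pose proof (pow_le r k Hr); lra.
Qed.

Lemma Gln_lower k g x : 0 < g < 1 -> 0 < x <= 1 -> INR k * entropy_ln g <= Gln k g x.
Proof.
  intros Hg Hx; rewrite Gln_decomp by exact Hx.
  assert (0 <= ln (1 + ((1 - x) / (1 + x)) ^ k))
    by (apply ln_one_add_pow_nonneg, Rdiv_le_0_compat; lra).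
  pose proof (entropy_ln_le_ln_succ_sub g x Hg ltac:(lra)).
  pose proof (pos_INR k); nra.
Qed.

Lemma Gln_at_odds k g : 0 < g < 1 / 2 ->
  Gln k g (g / (1 - g)) = INR k * entropy_ln g + ln (1 + (1 - 2 * g) ^ k).
Proof.
  intros Hg.
  pose proof (odds_in_01 g Hg).
  rewrite Gln_decomp, ln_succ_sub_at_odds by lra.
  replace ((1 - g / (1 - g)) / (1 + g / (1 - g))) with (1 - 2 * g) by (field; lra).
  reflexivity.
Qed.

Lemma Gln_continuous k g x : 0 < x <= 1 -> continuity_pt (Gln k g) x.
Proof.
  intros Hx; apply continuity_pt_filterlim, (ex_derive_continuous (Gln k g)).
  assert (0 < (1 + x) ^ k) by (apply pow_lt; lra).
  assert (0 <= (1 - x) ^ k) by (apply pow_le; lra).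
  unfold Gln; auto_derive.
  replace (1 + - x) with (1 - x) by ring; repeat split; lra.
Qed.

(* For [k >= 2] the term [(1 - x)^k] is flat at [x = 1]. *)
Lemma Gln_derivative_at_1 m g :
  derivable_pt_lim (Gln (S (S m)) g) 1 (INR (S (S m)) * (/ 2 - g)).
Proof.
  apply is_derive_Reals; unfold Gln.
  pose proof (pow_lt (1 + 1) m ltac:(lra)).
  auto_derive; replace (1 + - (1)) with 0 by ring; rewrite !Rmult_0_l, Rplus_0_r.
  - repeat split; nra.
  - change (match m with | 0%nat => 1 | S _ => INR m + 1 end) with (INR (S m)).
    rewrite (S_INR (S m)); field; lra.
Qed.

Lemma Gln_blowup_at_0 k g : (0 < k)%nat -> 0 < g ->
  forall M, exists a, 0 < a /\ forall x, 0 < x < a -> M < Gln k g x.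
Proof.
  intros Hk Hg M.
  assert (Hkg : 0 < INR k * g) by (apply Rmult_lt_0_compat; [apply lt_0_INR|]; assumption).
  exists (Rmin 1 (exp (- M / (INR k * g)))); split.
  { apply Rmin_pos; [lra | apply exp_pos]. }
  intros x [Hx0 Hxa].
  pose proof (Rmin_l 1 (exp (- M / (INR k * g)))).
  pose proof (Rmin_r 1 (exp (- M / (INR k * g)))).
  assert (Hlnx : ln x < - M / (INR k * g))
    by (rewrite <- (ln_exp (- M / (INR k * g))); apply ln_increasing; lra).
  assert (M < - (INR k * g) * ln x).
  { pose proof (Rmult_lt_compat_l (INR k * g) _ _ Hkg Hlnx) as Hm.
    replace (INR k * g * (- M / (INR k * g))) with (- M) in Hm
      by (field; split; [lra | apply not_0_INR; lia]).
    lra. }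
  assert (Hln1x : 0 <= ln (1 + x)) by (rewrite <- ln_1; apply ln_le; lra).
  rewrite Gln_decomp by lra.
  assert (0 <= ln (1 + ((1 - x) / (1 + x)) ^ k))
    by (apply ln_one_add_pow_nonneg, Rdiv_le_0_compat; lra).
  pose proof (Rmult_le_pos _ _ (pos_INR k) Hln1x); nra.
Qed.

Lemma lt_left_of_derivative_pos f p l : derivable_pt_lim f p l -> 0 < l ->
  forall e, 0 < e -> exists c, p - e < c < p /\ f c < f p.
Proof.
  intros Hd Hl e He.
  destruct (Hd (l / 2) ltac:(lra)) as [delta Hdelta].
  pose proof (cond_pos delta).
  set (t := Rmin (delta / 2) (e / 2)).
  assert (Ht : 0 < t) by (apply Rmin_pos; lra).
  assert (t <= delta / 2) by apply Rmin_l.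
  assert (t <= e / 2) by apply Rmin_r.
  exists (p - t); split; [lra|].
  specialize (Hdelta (- t) ltac:(lra) ltac:(rewrite Rabs_Ropp, Rabs_pos_eq; lra)).
  apply Rabs_def2 in Hdelta.
  set (q := (f (p + - t) - f p) / - t) in Hdelta.
  assert (f (p + - t) - f p = - (q * t)) by (unfold q; field; lra).
  assert (0 < q * t) by (apply Rmult_lt_0_compat; lra).
  replace (p - t) with (p + - t) by ring; lra.
Qed.

(* The minimum over [[a, 1]] is interior: it lies below [f c < f 1], and [f] exceeds [f c] on
   [(0, a)]. *)
Lemma attains_min_on_01 f :
  (forall x, 0 < x <= 1 -> continuity_pt f x) ->
  (exists c, 0 < c < 1 /\ f c < f 1) ->
  (forall M, exists a, 0 < a /\ forall x, 0 < x < a -> M < f x) ->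
  exists xm, 0 < xm < 1 /\ forall x, 0 < x < 1 -> f xm <= f x.
Proof.
  intros Hcont [c [Hc Hc1]] Hblow.
  destruct (Hblow (f c)) as [a [Ha Hfa]].
  set (b := Rmin a c).
  assert (0 < b <= c) by (split; [apply Rmin_pos | apply Rmin_r]; lra).
  assert (b <= a) by apply Rmin_l.
  destruct (continuity_ab_min f b 1 ltac:(lra) (fun x Hx => Hcont x ltac:(lra)))
    as [xm [Hmin Hxm]].
  assert (f xm <= f c) by (apply Hmin; lra).
  assert (xm <> 1) by (intros ->; lra).
  exists xm; split; [lra|].
  intros x Hx; destruct (Rlt_or_le x b).
  - pose proof (Hfa x ltac:(lra)); lra.
  - apply Hmin; lra.
Qed.

Lemma Gln_attains_min m g : 0 < g < 1 / 2 ->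
  exists xm, 0 < xm < 1 /\ forall x, 0 < x < 1 -> Gln (S (S m)) g xm <= Gln (S (S m)) g x.
Proof.
  intros Hg; apply attains_min_on_01.
  - apply Gln_continuous.
  - assert (Hslope : 0 < INR (S (S m)) * (/ 2 - g))
      by (apply Rmult_lt_0_compat; [apply lt_0_INR; lia | lra]).
    destruct (lt_left_of_derivative_pos _ _ _ (Gln_derivative_at_1 m g) Hslope 1 ltac:(lra))
      as [c [Hc Hfc]].
    exists c; split; [lra | exact Hfc].
  - apply Gln_blowup_at_0; [lia | lra].
Qed.

Lemma F_is_min k g : (exists v, is_min_on_01 (Gfun k g) v) -> is_min_on_01 (Gfun k g) (F k g).
Proof. exact (epsilon_spec (inhabits 0) _). Qed.

Lemma Gfun_attains_min m g : 0 < g < 1 / 2 -> exists v, is_min_on_01 (Gfun (INR (S (S m))) g) v.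
Proof.
  intros Hg; destruct (Gln_attains_min m g Hg) as [xm [Hxm Hmin]].
  exists (Gfun (INR (S (S m))) g xm); split; [exists xm; split; auto|].
  intros x Hx; rewrite !Gfun_Gln by assumption.
  apply Rplus_le_compat_r, Rmult_le_compat_r; [left; apply Rinv_0_lt_compat, ln2_pos|].
  apply Hmin, Hx.
Qed.

Theorem mainTheorem12 (k : nat) (gamma : R) :
  (1 < k)%nat -> 0 < gamma < 1 / 2 ->
  INR k * h gamma - 1 <= F (INR k) gamma /\
  F (INR k) gamma <= INR k * h gamma + log2 (1 + (1 - 2 * gamma) ^ k) - 1.
Proof.
  intros Hk Hg.
  destruct k as [|[|m]]; try lia.
  pose proof ln2_pos.
  destruct (F_is_min _ _ (Gfun_attains_min m gamma Hg)) as [[x0 [Hx0 <-]] Hmin].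
  rewrite h_entropy_ln; split.
  - rewrite Gfun_Gln by exact Hx0.
    pose proof (Gln_lower (S (S m)) gamma x0 ltac:(lra) ltac:(lra)).
    apply Rplus_le_compat_r; unfold Rdiv; rewrite <- Rmult_assoc.
    apply Rmult_le_compat_r; [left; apply Rinv_0_lt_compat|]; lra.
  - pose proof (odds_in_01 gamma Hg) as Hodds.
    pose proof (Hmin _ Hodds) as Hle.
    rewrite (Gfun_Gln _ _ (gamma / (1 - gamma))), Gln_at_odds in Hle by assumption.
    eapply Rle_trans; [exact Hle|].
    right; unfold log2; field; lra.
Qed.
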